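(* Let $\Omega$ be a plural type in which all operation symbols are binary, and let $\mathcal{V}_t$ be a variety satisfying $t(x,y)=x$ for some binary term $t$ in which both variables occur. Let $A=\bigsqcup_{s\in S}A_s$ be a semilattice sum of $\mathcal{V}_t$-algebras $A_s$ over the (meet) semilattice $S$, such that for each $s\in S$ and each $\star\in\Omega$ there is $e^\star_s\in A_s$ with $a\star e^\star_s=a$ for all $a\in A_s$. For $t\le s$ in $S$ and $\star\in\Omega$ define $\varphi^\star_{s,t}\colon A_s\to A_t$ by $\varphi^\star_{s,t}(a_s)=a_s\star e^\star_t$. Then $A$ satisfies $$(a_s\star b_t)\star e^\star_u=(a_s\star e^\star_u)\star(b_t\star e^\star_u)\quad\text{for all } s,t,u\in S \text{ with } u\le s,t,\ a_s\in A_s,\ b_t\in A_t,\ \star\in\Omega$$ if and only if $A$ is the strict Lallement sum of the subalgebras $A_s$ over $S$ given by the maps $\varphi^\star_{s,t}$.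
   Context: A semilattice sum of $\mathcal{V}_t$-algebras is an algebra $A$ with a congruence whose quotient $S$ is a semilattice (all basic operations become the semilattice meet $\cdot$) and whose classes $A_s$ ($s\in S$) are subalgebras lying in $\mathcal{V}_t$; then $a_s\star b_t\in A_{s\cdot t}$. Here $t\le s$ means $s\cdot t=t$. Strict Lallement sum: given a meet semilattice $S$, algebras $A_s$ ($s\in S$), and for each $\star\in\Omega$ and each pair $t\le s$ in $S$ a $\star$-homomorphism $\varphi^\star_{s,t}\colon(A_s,\star)\to(A_t,\star)$ such that (1) $\varphi^\star_{s,s}$ is the identity of $A_s$ and (2) for all $s,t\in S$, $u\le s\cdot t$, $a_s\in A_s$, $b_t\in A_t$: $\varphi^\star_{s\cdot t,u}\bigl(\varphi^\star_{s,s\cdot t}(a_s)\star\varphi^\star_{t,s\cdot t}(b_t)\bigr)=\varphi^\star_{s,u}(a_s)\star\varphi^\star_{t,u}(b_t)$, the strict Lallement sum is the disjoint union $\bigsqcup_{s\in S}A_s$ with operations $a_s\star b_t=\varphi^\star_{s,s\cdot t}(a_s)\star\varphi^\star_{t,s\cdot t}(b_t)$. ''$A$ is the strict Lallement sum given by the maps $\varphi^\star_{s,t}$'' means these maps satisfy (1)–(2) and the operations of $A$ are given by this formula. *)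

From HB Require Import structures.
From mathcomp Require Import all_boot all_order.
Set Implicit Arguments. Unset Strict Implicit. Unset Printing Implicit Defensive.
Import Order.TTheory.
Local Open Scope order_scope.

(* Binary terms over a type Om of binary operation symbols, in variables x (Var0), y (Var1). *)
Inductive bterm (Om : Type) : Type :=
| Var0 : bterm Om
| Var1 : bterm Om
| App : Om -> bterm Om -> bterm Om -> bterm Om.
Arguments Var0 {Om}. Arguments Var1 {Om}.

Fixpoint beval (Om A : Type) (op : Om -> A -> A -> A) (t : bterm Om) (x y : A) : A :=
  match t with
  | Var0 => x
  | Var1 => y
  | App o t1 t2 => op o (beval op t1 x y) (beval op t2 x y)
  end.

Fixpoint occurs0 (Om : Type) (t : bterm Om) : bool :=
  match t with Var0 => true | Var1 => false | App _ t1 t2 => occurs0 t1 || occurs0 t2 end.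
Fixpoint occurs1 (Om : Type) (t : bterm Om) : bool :=
  match t with Var0 => false | Var1 => true | App _ t1 t2 => occurs1 t1 || occurs1 t2 end.

(* An algebra (A, op) of binary type Om with a surjective homomorphism pi onto the
   meet semilattice S (all operations sent to meet); the classes A_s = pi^-1(s) are
   then subalgebras. *)
Definition semilattice_sum (Om A : Type) d (S : meetSemilatticeType d)
    (op : Om -> A -> A -> A) (pi : A -> S) : Prop :=
  (forall o a b, pi (op o a b) = pi a `&` pi b) /\ (forall s : S, exists a, pi a = s).

Definition classes_satisfy (Om A : Type) d (S : meetSemilatticeType d)
    (op : Om -> A -> A -> A) (pi : A -> S) (t : bterm Om) : Prop :=
  forall a b, pi a = pi b -> beval op t a b = a.

(* A is the strict Lallement sum of the A_s given by the maps phi o s t : A_s -> A_t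
   (t <= s); phi is a function on A, only its restriction to A_s matters. *)
Definition strict_Lallement_sum_by (Om A : Type) d (S : meetSemilatticeType d)
    (op : Om -> A -> A -> A) (pi : A -> S) (phi : Om -> S -> S -> A -> A) : Prop :=
  (forall o (s t : S) a, t <= s -> pi a = s -> pi (phi o s t a) = t) /\
  (forall o (s t : S) a b, t <= s -> pi a = s -> pi b = s ->
      phi o s t (op o a b) = op o (phi o s t a) (phi o s t b)) /\
  (forall o (s : S) a, pi a = s -> phi o s s a = a) /\
  (* (2) *)
  (forall o (s t u : S) a b, u <= s `&` t -> pi a = s -> pi b = t ->
      phi o (s `&` t) u (op o (phi o s (s `&` t) a) (phi o t (s `&` t) b))
      = op o (phi o s u a) (phi o t u b)) /\
  (* the operations of A are given by the Lallement formula *)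
  (forall o a b,
      op o a b = op o (phi o (pi a) (pi a `&` pi b) a) (phi o (pi b) (pi a `&` pi b) b)).

From HB Require Import structures.
From mathcomp Require Import all_boot all_order.
Import Order.TTheory.
Local Open Scope order_scope.

(* Write [a * e_u] for [op o a (e o u)].  Instantiating the identity at
   [u = s & t] and using that [e o (s & t)] is a right unit on [A_(s & t)]
   gives the Lallement formula [a * b = (a * e_(s&t)) * (b * e_(s&t))]; the
   homomorphism property of the maps is the identity with [s = t], and
   condition (2) is the identity read through the Lallement formula.
   Conversely, condition (2) together with the Lallement formula is exactly
   the identity. *)

Section UnitTranslations.

Variables (Om A : Type) (d : Order.disp_t) (S : meetSemilatticeType d).
Variables (op : Om -> A -> A -> A) (pi : A -> S) (e : Om -> S -> A).

Hypothesis pi_op : forall o a b, pi (op o a b) = pi a `&` pi b.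
Hypothesis pi_e : forall o s, pi (e o s) = s.
Hypothesis e_runit : forall o s a, pi a = s -> op o a (e o s) = a.

Definition translate_by_unit o (s t : S) (a : A) := op o a (e o t).

Definition unit_translation_distributive :=
  forall o (s t u : S) a b, u <= s -> u <= t -> pi a = s -> pi b = t ->
    op o (op o a b) (e o u) = op o (op o a (e o u)) (op o b (e o u)).

Lemma lallement_formula_of_distributive :
  unit_translation_distributive -> forall o a b,
  op o a b = op o (op o a (e o (pi a `&` pi b))) (op o b (e o (pi a `&` pi b))).
Proof.
move=> distr o a b.
by rewrite -(distr o (pi a) (pi b)) ?leIl ?leIr // e_runit ?pi_op.
Qed.

Lemma strict_Lallement_sum_of_distributive :
  unit_translation_distributive ->
  strict_Lallement_sum_by op pi translate_by_unit.
Proof.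
move=> distr; have lallement := lallement_formula_of_distributive distr.
split; [|split; [|split; [|split]]].
- by move=> o s t a le_ts pa; rewrite pi_op pi_e pa meet_r.
- move=> o s t a b le_ts pa pb; exact: (distr o s s t).
- by move=> o s a pa; apply: e_runit.
- move=> o s t u a b le_u pa pb; rewrite /translate_by_unit.
  have [le_us le_ut] : u <= s /\ u <= t by apply/andP; rewrite -lexI.
  by rewrite -pa -pb -lallement (distr o (pi a) (pi b)) // ?pa ?pb.
- exact: lallement.
Qed.

Lemma distributive_of_strict_Lallement_sum :
  strict_Lallement_sum_by op pi translate_by_unit ->
  unit_translation_distributive.
Proof.
move=> [_ [_ [_ [cond2 lallement]]]] o s t u a b le_us le_ut pa pb.
have le_u : u <= s `&` t by rewrite lexI le_us le_ut.
by rewrite -(cond2 o s t u a b) // -pa -pb -lallement.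
Qed.

End UnitTranslations.

Theorem theorem7p2 (Om : Type) (t : bterm Om) (A : Type) (d : Order.disp_t)
    (S : meetSemilatticeType d) (op : Om -> A -> A -> A) (pi : A -> S)
    (e : Om -> S -> A) :
  occurs0 t -> occurs1 t ->
  semilattice_sum op pi ->
  classes_satisfy op pi t ->
  (forall o s, pi (e o s) = s) ->
  (forall o s a, pi a = s -> op o a (e o s) = a) ->
  ((forall o (s t u : S) a b, u <= s -> u <= t -> pi a = s -> pi b = t ->
      op o (op o a b) (e o u) = op o (op o a (e o u)) (op o b (e o u)))
   <->
   strict_Lallement_sum_by op pi (fun o (s t : S) a => op o a (e o t))).
Proof.
move=> _ _ [pi_op _] _ pi_e e_runit; split.
- exact: strict_Lallement_sum_of_distributive.
- exact: distributive_of_strict_Lallement_sum.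
Qed.
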